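(* Let $J\ge 2$ be an integer, $\tau_j=2^j$, and for $(\alpha,\beta)\in(0,\infty)\times(0,\pi]$ define $\nu_j(\alpha,\beta)=\dfrac{\alpha^2\{1-\cos(\beta\tau_j/2)\}^2}{\tau_j^2\{1-\cos\beta\}}$ for $j=1,\dots,J$. Then the map $(\alpha,\beta)\mapsto[\nu_j(\alpha,\beta)]_{j=1,\dots,J}$ is injective on $(0,\infty)\times(0,\pi]$: if $\nu_j(\alpha_1,\beta_1)=\nu_j(\alpha_2,\beta_2)$ for all $j=1,\dots,J$, then $(\alpha_1,\beta_1)=(\alpha_2,\beta_2)$.
   Context: $\nu_j(\alpha,\beta)$ is the theoretical Haar wavelet variance at level $j$ of the sinusoidal process $S_t=\alpha\sin(\beta t+U)$, $U\sim\mathcal U(0,2\pi)$. *)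

From Stdlib Require Import Reals.
Open Scope R_scope.

Definition tau (j : nat) : R := 2 ^ j.

(* theoretical Haar wavelet variance at level j of alpha sin(beta t + U) *)
Definition nu (j : nat) (alpha beta : R) : R :=
  alpha ^ 2 * (1 - cos (beta * tau j / 2)) ^ 2 / (tau j ^ 2 * (1 - cos beta)).

(* Writing c = cos beta, the
   double-angle formula gives the closed forms
     nu_1(alpha, beta) = alpha^2 (1 - c) / 4,
     nu_2(alpha, beta) = nu_1(alpha, beta) (1 + c)^2.
   Since 0 < beta <= pi we have c < 1, so nu_1 > 0 and the ratio nu_2 / nu_1
   determines (1 + c)^2, hence c (as 1 + c >= 0), hence beta (cos is injective
   on [0, pi]).  Once beta is known, nu_1 determines alpha^2, hence alpha > 0.
   The file proves the two closed forms, the positivity of nu_1, and then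
   derives the theorem. *)

From Stdlib Require Import Reals Lra Lia Psatz.
Open Scope R_scope.

(* On (0, pi] the cosine stays strictly below 1; this keeps the denominator
   1 - cos beta of nu nonzero. *)
Lemma cos_lt_1 (b : R) : 0 < b <= PI -> cos b < 1.
Proof.
  intros Hb.
  destruct (COS_bound b) as [_ [Hlt | Heq]]; [exact Hlt |].
  assert (b = 0) by (apply cos_inj; [lra | pose proof PI_RGT_0; lra | now rewrite cos_0]).
  lra.
Qed.

Lemma nu_level1 (a b : R) : 0 < b <= PI -> nu 1 a b = a ^ 2 * (1 - cos b) / 4.
Proof.
  intros Hb. pose proof (cos_lt_1 b Hb).
  unfold nu, tau. replace (b * 2 ^ 1 / 2) with b by field.
  field. lra.
Qed.

(* Closed form at level 2: by cos(2 beta) = 2 cos^2 beta - 1, the level-2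
   variance is the level-1 variance times (1 + cos beta)^2. *)
Lemma nu_level2 (a b : R) : 0 < b <= PI -> nu 2 a b = nu 1 a b * (1 + cos b) ^ 2.
Proof.
  intros Hb. pose proof (cos_lt_1 b Hb).
  rewrite nu_level1 by exact Hb.
  unfold nu, tau. replace (b * 2 ^ 2 / 2) with (2 * b) by field.
  rewrite cos_2a_cos. field. lra.
Qed.

(* The level-1 variance of a nondegenerate sinusoid is positive, so it can be
   divided out of the level-2 equation. *)
Lemma nu_level1_pos (a b : R) : 0 < a -> 0 < b <= PI -> 0 < nu 1 a b.
Proof.
  intros Ha Hb. pose proof (cos_lt_1 b Hb).
  rewrite nu_level1 by exact Hb.
  apply Rdiv_lt_0_compat; [apply Rmult_lt_0_compat; [apply pow_lt |] |]; lra.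
Qed.

Theorem lemma2 (J : nat) (HJ : (2 <= J)%nat) (a1 b1 a2 b2 : R) :
  0 < a1 -> 0 < b1 <= PI -> 0 < a2 -> 0 < b2 <= PI ->
  (forall j : nat, (1 <= j <= J)%nat -> nu j a1 b1 = nu j a2 b2) ->
  a1 = a2 /\ b1 = b2.
Proof.
  intros Ha1 Hb1 Ha2 Hb2 Heq.
  pose proof (Heq 1%nat ltac:(lia)) as E1.
  pose proof (Heq 2%nat ltac:(lia)) as E2.
  pose proof (nu_level1_pos a1 b1 Ha1 Hb1) as Hpos.
  rewrite !nu_level2, <- E1 in E2 by assumption.
  assert (Hsq : (1 + cos b1) ^ 2 = (1 + cos b2) ^ 2)
    by (apply Rmult_eq_reg_l with (nu 1 a1 b1); lra).
  assert (Hcos : cos b1 = cos b2)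
    by (pose proof (COS_bound b1); pose proof (COS_bound b2); nra).
  assert (Hb : b1 = b2) by (apply cos_inj; lra).
  split; [| exact Hb].
  rewrite !nu_level1 in E1 by assumption.
  rewrite Hcos in E1.
  pose proof (cos_lt_1 b2 Hb2).
  assert (Ha : a1 ^ 2 = a2 ^ 2) by (apply Rmult_eq_reg_r with ((1 - cos b2) / 4); lra).
  nra.
Qed.
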